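(* Let $v_3:\mathbb{P}(\mathbb{K}^2)\hookrightarrow\mathbb{P}(\operatorname{Sym}^3\mathbb{K}^2)\cong\mathbb{P}^3$ be the Veronese embedding and let $L\subseteq\mathbb{P}^3$ be a line not intersecting $v_3(\mathbb{P}^1)$. Then there exist coordinates (linear forms) $x,y$ on $\mathbb{P}^1$ and scalars $a,b\in\mathbb{K}$ such that $L$ is spanned by the two points $[x^3+ay^3]$ and $[x^3+b(x+y)^3]$.
   Context: $\mathbb{K}$ is an algebraically closed field of characteristic zero; points of $\mathbb{P}(\operatorname{Sym}^3\mathbb{K}^2)$ are identified with binary cubic forms up to scalar, and $v_3([\ell])=[\ell^3]$. *)

From HB Require Import structures.
From mathcomp Require Import all_boot all_order all_algebra.
Set Implicit Arguments. Unset Strict Implicit. Unset Printing Implicit Defensive.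
Import GRing.Theory.
Local Open Scope ring_scope.

(* A binary cubic form  c0 X^3 + c1 X^2 Y + c2 X Y^2 + c3 Y^3  over K is
   identified with its coefficient row vector (c0, c1, c2, c3) in 'rV[K]_4,
   i.e. Sym^3 K^2 ~ K^4. Points of P^3 are lines of K^4; a projective line
   L in P^3 is a 2-dimensional linear subspace of K^4. *)

(* Coefficient vector of the cube (u X + v Y)^3 of a linear form. *)
Definition cube (K : fieldType) (u v : K) : 'rV[K]_4 :=
  \row_(i < 4) [:: u ^+ 3; 3%:R * u ^+ 2 * v; 3%:R * u * v ^+ 2; v ^+ 3]`_i.

From HB Require Import structures.
From mathcomp Require Import all_boot all_order all_algebra.
From mathcomp Require Import ring zify.
From Stdlib Require Import Classical.
Set Implicit Arguments. Unset Strict Implicit. Unset Printing Implicit Defensive.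
Import GRing.Theory.
Local Open Scope ring_scope.

(* Write L as the common kernel of two independent linear forms f and g on
   Sym^3 K^2.  Restricted to the twisted cubic they become binary cubics, and
   L misses the twisted cubic iff f and g have no common root.  Some member
   f + t g of the pencil has three distinct roots: otherwise every member has a
   double root, which is a root of the Jacobian of f and g, a nonzero binary
   quartic since f and g are independent; as distinct members share no root,
   six members would give six distinct roots of a quartic.  Rescaled, these
   roots are x, y and x + y.  The hyperplane f + t g = 0 contains L, x^3, y^3
   and (x + y)^3, so L meets the lines x^3 y^3 and x^3 (x + y)^3 in points
   x^3 + a y^3 and x^3 + b (x + y)^3 (where g vanishes), which are
   independent and therefore span L. *)

Section VspaceKernel.
Variables (K : fieldType) (n : nat) (L : {vspace 'rV[K]_n}).

Definition vbasis_mx : 'M[K]_(\dim L, n) := \matrix_(i < \dim L) (vbasis L)`_i.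

Lemma vbasis_mx_free : row_free vbasis_mx.
Proof.
apply/inj_row_free => v; rewrite mulmx_sum_row => v0; apply/rowP => i.
rewrite mxE; move/freeP: (basis_free (vbasisP L)) => /(_ (v 0)) -> //.
by apply: etrans v0; apply: eq_bigr => j _; rewrite rowK.
Qed.

Lemma mem_vbasis_mx c : (c \in L) = (c <= vbasis_mx)%MS.
Proof.
apply/idP/submxP => [/coord_vbasis -> | [D ->]].
  exists (\row_i coord (vbasis L) i c); rewrite mulmx_sum_row.
  by apply: eq_bigr => i _; rewrite rowK mxE.
rewrite mulmx_sum_row; apply: memv_suml => i _.
by rewrite rowK memvZ // vbasis_mem // mem_nth // size_tuple.
Qed.

Lemma vspace_kernel k : (\dim L + k)%N = n ->
  exists C : 'M[K]_(n, k), \rank C = k /\ forall c, (c \in L) = (c *m C == 0).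
Proof.
move=> dimLk; set N := cokermx vbasis_mx.
have rN : \rank N = k by rewrite mxrank_coker (eqP vbasis_mx_free) -{1}dimLk addKn.
have := mxrankM_maxl (col_base N) (row_base N); rewrite mulmx_base.
have := row_base_free N; have := mulmx_base N.
(* Generalize the factors so that [\rank N] can be rewritten to [k] in their types. *)
move: (col_base N) (row_base N); rewrite rN => C R CR freeR rC.
exists C; split; first by apply/eqP; rewrite eqn_leq rank_leq_col.
by move=> c; rewrite mem_vbasis_mx submxE -/N -CR mulmxA mulmx_free_eq0.
Qed.

End VspaceKernel.

Section LinearForms.
Variables (K : fieldType) (n : nat).
Implicit Types (f g h : 'cV[K]_n) (c d : 'rV[K]_n).

Definition ev h c : K := (c *m h) 0 0.

Lemma evDl f g c : ev (f + g) c = ev f c + ev g c.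
Proof. by rewrite /ev mulmxDr mxE. Qed.

Lemma evZl t h c : ev (t *: h) c = t * ev h c.
Proof. by rewrite /ev -scalemxAr mxE. Qed.

Lemma evDr h c d : ev h (c + d) = ev h c + ev h d.
Proof. by rewrite /ev mulmxDl mxE. Qed.

Lemma evZr t h c : ev h (t *: c) = t * ev h c.
Proof. by rewrite /ev -scalemxAl mxE. Qed.

Lemma mulmx_cV_eq0 h c : (c *m h == 0) = (ev h c == 0).
Proof.
apply/eqP/eqP => [ch0 | h0]; first by rewrite /ev ch0 mxE.
by apply/matrixP => i j; rewrite !ord1 [RHS]mxE.
Qed.

Lemma minors_eq0_dependent f g :
  (forall i j, f i 0 * g j 0 = f j 0 * g i 0) ->
  exists l m, ((l != 0) || (m != 0)) /\ l *: f + m *: g = 0.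
Proof.
move=> fg_minors; have [->|/matrix0Pn [i [j0 fij]]] := eqVneq f 0.
  by exists 1, 0; rewrite oner_neq0 scale0r !addr0 scaler0.
rewrite ord1 {j0} in fij; exists (g i 0), (- f i 0).
split; first by rewrite oppr_eq0 fij orbT.
by apply/matrixP => k j; rewrite ord1 !mxE mulNr mulrC fg_minors subrr.
Qed.

Lemma vspace_codim2_kernel (L : {vspace 'rV[K]_n}) : (\dim L + 2)%N = n ->
  exists f g, (forall l m, l *: f + m *: g = 0 -> l = 0 /\ m = 0) /\
              forall c, (c \in L) = (ev f c == 0) && (ev g c == 0).
Proof.
move=> dimL2; have [C [rC memC]] : exists C : 'M_(n, 1 + 1),
    \rank C = 2%N /\ forall c : 'rV[K]_n, (c \in L) = (c *m C == 0).
  exact: vspace_kernel.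
exists (lsubmx C), (rsubmx C); split.
  move=> l m lm0; have : (col_mx l%:M m%:M)^T *m C^T == 0.
    by rewrite -trmx_mul -[C]hsubmxK mul_row_col !mul_mx_scalar lm0 trmx0.
  rewrite mulmx_free_eq0 /row_free ?mxrank_tr ?rC // trmx_eq0 col_mx_eq0.
  case/andP => /eqP/matrixP/(_ 0 0) + /eqP/matrixP/(_ 0 0).
  by rewrite !mxE eqxx !mulr1n => -> ->.
by move=> c; rewrite memC -{1}[C]hsubmxK mul_mx_row row_mx_eq0 !mulmx_cV_eq0.
Qed.

End LinearForms.

Section CharacteristicZero.
Variables (R : idomainType) (charR : [pchar R] =i pred0).

Lemma natf_neq0 k : (0 < k)%N -> k%:R != 0 :> R.
Proof. by move/pcharf0P: charR => ->; rewrite -lt0n. Qed.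

Lemma natf_inj : injective (fun k : nat => k%:R : R).
Proof.
have neq k l : (k < l)%N -> l%:R != k%:R :> R.
  by move=> kl; rewrite -subr_eq0 -natrB ?natf_neq0 ?subn_gt0 // ltnW.
move=> i j /= /eqP; apply: contraTeq => ij.
by case: ltngtP ij => // [/neq | /neq]; rewrite // eq_sym.
Qed.

End CharacteristicZero.

Section BinaryCubicForms.
Variable K : fieldType.
Implicit Types (f g h : 'cV[K]_4) (z w : K * K).

Lemma ord4P (P : 'I_4 -> Prop) : P 0 -> P 1 -> P 2 -> P 3 -> forall i, P i.
Proof.
by move=> P0 P1 P2 P3 [[|[|[|[|//]]]] i4];
  [move: P0 | move: P1 | move: P2 | move: P3]; congr P; apply: val_inj.
Qed.

Lemma col4P h h' :
  h 0 0 = h' 0 0 -> h 1 0 = h' 1 0 -> h 2 0 = h' 2 0 -> h 3 0 = h' 3 0 -> h = h'.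
Proof. by move=> *; apply/matrixP => i j; rewrite ord1; move: i; apply: ord4P. Qed.

Lemma ev_row4 (a b c d : K) h :
  ev h (\row_(i < 4) [:: a; b; c; d]`_i) = a * h 0 0 + b * h 1 0 + c * h 2 0 + d * h 3 0.
Proof.
rewrite /ev mxE !big_ord_recl big_ord0 !mxE /= addr0 !addrA.
by congr (_ * h _ _ + _ * h _ _ + _ * h _ _ + _ * h _ _); apply: val_inj.
Qed.

(* A nonzero pair z stands for the point [z] of P^1, and [det2 z w != 0]
   says that [z] and [w] are distinct points. *)
Definition det2 z w := z.1 * w.2 - z.2 * w.1.

Definition cubic h z := ev h (cube z.1 z.2).

(* One third of the partial derivatives of [cubic h] in z.1 and z.2. *)
Definition polar_u h z :=
  ev h (\row_(i < 4) [:: z.1 ^+ 2; 2%:R * z.1 * z.2; z.2 ^+ 2; 0]`_i).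
Definition polar_v h z :=
  ev h (\row_(i < 4) [:: 0; z.1 ^+ 2; 2%:R * z.1 * z.2; z.2 ^+ 2]`_i).

Definition singular_root h z :=
  [&& z != 0, cubic h z == 0, polar_u h z == 0 & polar_v h z == 0].

Definition has_three_roots h := exists z1 z2 z3,
  [/\ cubic h z1 = 0, cubic h z2 = 0, cubic h z3 = 0 &
      [&& det2 z1 z2 != 0, det2 z1 z3 != 0 & det2 z2 z3 != 0]].

Lemma det2xx z : det2 z z = 0.
Proof. by rewrite /det2 mulrC subrr. Qed.

Lemma pair_neq0 (u v : K) : ((u, v) != 0) = (u != 0) || (v != 0).
Proof. by rewrite -negb_and. Qed.

Lemma det2_neq0l z w : det2 z w != 0 -> z != 0.
Proof. by apply: contraNneq => ->; rewrite /det2 !mul0r subrr. Qed.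

Lemma det2_neq0r z w : det2 z w != 0 -> w != 0.
Proof. by apply: contraNneq => ->; rewrite /det2 !mulr0 subrr. Qed.

Lemma cubicZ c h z : cubic (c *: h) z = c * cubic h z.
Proof. exact: evZl. Qed.

Lemma cubicDZ f g t z : cubic (f + t *: g) z = cubic f z + t * cubic g z.
Proof. by rewrite /cubic evDl evZl. Qed.

Lemma cubic_scale h k u v : cubic h (k * u, k * v) = k ^+ 3 * cubic h (u, v).
Proof. by rewrite /cubic /cube !ev_row4 /=; ring. Qed.

Lemma det2_eq0_scale z w : w != 0 -> det2 z w = 0 -> exists k, z = (k * w.1, k * w.2).
Proof.
case: z w => [u v] [a b]; rewrite /det2 pair_neq0 /= => ab0 /eqP.
rewrite subr_eq0 => /eqP E; case/orP: ab0 => [a0 | b0].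
  by exists (u / a); rewrite divfK // mulrAC E mulfK.
by exists (v / b); rewrite divfK // mulrAC -E mulfK.
Qed.

Lemma cubic_eq0_det2 h z w : w != 0 -> det2 z w = 0 -> cubic h w = 0 -> cubic h z = 0.
Proof.
by case: w => a b w0 /(det2_eq0_scale w0) [k ->]; rewrite cubic_scale => ->; rewrite mulr0.
Qed.

Lemma singular_rootZ c h z : singular_root h z -> singular_root (c *: h) z.
Proof.
rewrite /singular_root /cubic /polar_u /polar_v => /and4P [-> hz uz vz].
by rewrite !evZl !mulf_eq0 hz uz vz !orbT.
Qed.

Lemma pencil_common_root f g s t z w : s != t -> w != 0 -> det2 z w = 0 ->
  cubic (f + s *: g) z = 0 -> cubic (f + t *: g) w = 0 -> cubic f z = 0 /\ cubic g z = 0.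
Proof.
move=> st w0 zw fs /(cubic_eq0_det2 w0 zw) ft; move: fs ft; rewrite !cubicDZ => fs ft.
have /eqP : (s - t) * cubic g z = 0.
  transitivity ((cubic f z + s * cubic g z) - (cubic f z + t * cubic g z)); first by ring.
  by rewrite fs ft subrr.
rewrite mulf_eq0 subr_eq0 (negbTE st) /= => /eqP gz.
by split; last exact: gz; move: fs; rewrite gz mulr0 addr0.
Qed.

Lemma has_three_roots_normal h : has_three_roots h -> exists p q r s,
  [/\ p * s - q * r != 0, cubic h (p, q) = 0, cubic h (r, s) = 0 & cubic h (p + r, q + s) = 0].
Proof.
case=> [[u1 v1] [[u2 v2] [[u3 v3] [h1 h2 h3 /and3P []]]]]; rewrite /det2 /= => d12 d13 d23.
pose a := - (u2 * v3 - v2 * u3) / (u1 * v2 - v1 * u2).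
pose b := (u1 * v3 - v1 * u3) / (u1 * v2 - v1 * u2).
have a0 : a != 0 by rewrite mulf_neq0 ?oppr_eq0 ?invr_eq0.
have b0 : b != 0 by rewrite mulf_neq0 ?invr_eq0.
exists (a * u1), (a * v1), (b * u2), (b * v2); split.
- have -> : a * u1 * (b * v2) - a * v1 * (b * u2) = a * b * (u1 * v2 - v1 * u2) by ring.
  by rewrite mulf_neq0 // mulf_neq0.
- by rewrite cubic_scale h1 mulr0.
- by rewrite cubic_scale h2 mulr0.
have -> : (a * u1 + b * u2, a * v1 + b * v2) = (u3, v3) by congr pair; rewrite /a /b; field.
exact: h3.
Qed.

Lemma size_pairwise_roots (p : {poly K}) (s : seq (K * K)) :
  p != 0 -> pairwise (fun z w => det2 z w != 0) s ->
  (forall z, z \in s -> z.2 != 0 -> root p (z.1 / z.2)) -> (size s <= size p)%N.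
Proof.
move=> p0 s_distinct s_roots; set affine := [pred z : K * K | z.2 != 0].
have affine_roots : (count affine s < size p)%N.
  rewrite -size_filter -(size_map (fun z => z.1 / z.2)); apply: max_poly_roots p0 _ _.
    by apply/allP => x /mapP [z]; rewrite mem_filter => /andP [z2 zs] ->; apply: s_roots.
  rewrite uniq_pairwise pairwise_map.
  apply: sub_in_pairwise (filter_all affine s) (pairwise_filter affine s_distinct).
  move=> z w; rewrite !inE /relpre /= => z2 w2; apply: contra => /eqP zw.
  have -> : det2 z w = z.2 * w.2 * (z.1 / z.2 - w.1 / w.2).
    by rewrite /det2; field; apply/andP.
  by rewrite zw subrr mulr0.
have points_at_infinity : (count (predC affine) s <= 1)%N.
  rewrite -size_filter.
  move: (filter_all (predC affine) s) (pairwise_filter (predC affine) s_distinct).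
  case: filter => [|z [|w t]] //= /and3P [/negPn/eqP z2 /negPn/eqP w2 _].
  by case/andP => /andP [+ _] _; rewrite /det2 z2 w2 mulr0 mul0r subrr eqxx.
by move: (count_predC affine s) affine_roots points_at_infinity; lia.
Qed.

Definition jacobian f g z := polar_u f z * polar_v g z - polar_v f z * polar_u g z.

Definition minor f g (i j : 'I_4) := f i 0 * g j 0 - f j 0 * g i 0.

(* [jacobian f g (x, 1)] as a polynomial in x. *)
Definition jacobian_poly f g : {poly K} := \poly_(i < 5)
  [:: minor f g 2 3; 2%:R * minor f g 1 3; minor f g 0 3 + 3%:R * minor f g 1 2;
      2%:R * minor f g 0 2; minor f g 0 1]`_i.

Lemma jacobianDZ f g t z : jacobian (f + t *: g) g z = jacobian f g z.
Proof. by rewrite /jacobian /polar_u /polar_v !evDl !evZl; ring. Qed.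

Lemma singular_root_jacobian_poly f g t z :
  singular_root (f + t *: g) z -> z.2 != 0 -> root (jacobian_poly f g) (z.1 / z.2).
Proof.
case/and4P => _ _ /eqP uz /eqP vz z2.
have: jacobian (f + t *: g) g z = z.2 ^+ 4 * (jacobian_poly f g).[z.1 / z.2].
  rewrite jacobianDZ horner_poly !big_ord_recl big_ord0 /= /jacobian /polar_u /polar_v.
  by rewrite !ev_row4 /minor; field.
rewrite /jacobian uz vz !mul0r subrr => /esym/eqP.
by rewrite mulf_eq0 expf_eq0 (negbTE z2) andbF.
Qed.

Hypothesis charK : [pchar K] =i pred0.

Lemma jacobian_poly_eq0_minors f g :
  jacobian_poly f g = 0 -> forall i j, f i 0 * g j 0 = f j 0 * g i 0.
Proof.
move=> J0; have coef0 k : (jacobian_poly f g)`_k = 0 by rewrite J0 coef0.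
have n2 := natf_neq0 charK (isT : (0 < 2)%N); have n3 := natf_neq0 charK (isT : (0 < 3)%N).
move: (coef0 0%N) (coef0 1%N) (coef0 2%N) (coef0 3%N) (coef0 4%N); rewrite !coef_poly /=.
move=> m23 /eqP; rewrite mulf_eq0 (negbTE n2) => /eqP m13 m03 /eqP.
rewrite mulf_eq0 (negbTE n2) => /eqP m02 m01.
have m12 : minor f g 1 2 = 0.
  have /eqP : 3%:R * minor f g 1 2 ^+ 2 = 0.
    (* Plücker relation m01 m23 - m02 m13 + m03 m12 = 0. *)
    transitivity (minor f g 1 2 * (minor f g 0 3 + 3%:R * minor f g 1 2)
      - minor f g 0 2 * minor f g 1 3 + minor f g 0 1 * minor f g 2 3).
      by rewrite /minor; ring.
    by rewrite m03 m02 m01 !mul0r mulr0 subr0 addr0.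
  by rewrite mulf_eq0 (negbTE n3) expf_eq0 /= => /eqP.
move: m03; rewrite m12 mulr0 addr0 => m03.
have minorC i j : minor f g i j = - minor f g j i by rewrite /minor opprB.
move=> i j; apply/eqP; rewrite -subr_eq0 -/(minor f g i j); apply/eqP; move: i j.
do 2 apply: ord4P; try by [rewrite /minor subrr | ].
all: by rewrite minorC ?m01 ?m02 ?m03 ?m12 ?m13 ?m23 oppr0.
Qed.

Lemma jacobian_poly_neq0 f g :
  (forall l m, l *: f + m *: g = 0 -> l = 0 /\ m = 0) -> jacobian_poly f g != 0.
Proof.
move=> fg_free; apply/eqP => /jacobian_poly_eq0_minors/minors_eq0_dependent [l [m []]].
by move=> /[swap] /fg_free [-> ->]; rewrite eqxx.
Qed.

Definition cubic_of_roots z1 z2 z3 : 'cV[K]_4 := \col_(i < 4)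
  [:: z1.2 * z2.2 * z3.2;
      - (z1.1 * z2.2 * z3.2 + z1.2 * z2.1 * z3.2 + z1.2 * z2.2 * z3.1) / 3%:R;
      (z1.1 * z2.1 * z3.2 + z1.1 * z2.2 * z3.1 + z1.2 * z2.1 * z3.1) / 3%:R;
      - (z1.1 * z2.1 * z3.1)]`_i.

Lemma cubic_of_rootsE z1 z2 z3 w :
  cubic (cubic_of_roots z1 z2 z3) w = det2 w z1 * det2 w z2 * det2 w z3.
Proof.
have n3 := natf_neq0 charK (isT : (0 < 3)%N).
by rewrite /cubic /cube ev_row4 !mxE /det2 /=; field.
Qed.

Lemma singular_root_of_roots z1 z2 z3 w : w != 0 ->
  det2 w z1 * det2 w z2 = 0 -> det2 w z1 * det2 w z3 = 0 -> det2 w z2 * det2 w z3 = 0 ->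
  singular_root (cubic_of_roots z1 z2 z3) w.
Proof.
move=> w0 e12 e13 e23; have n3 := natf_neq0 charK (isT : (0 < 3)%N).
rewrite /singular_root w0 cubic_of_rootsE e12 mul0r eqxx /=.
have -> : polar_u (cubic_of_roots z1 z2 z3) w = (z3.2 * (det2 w z1 * det2 w z2)
    + z2.2 * (det2 w z1 * det2 w z3) + z1.2 * (det2 w z2 * det2 w z3)) / 3%:R.
  by rewrite /polar_u ev_row4 !mxE /det2 /=; field.
have -> : polar_v (cubic_of_roots z1 z2 z3) w = - (z3.1 * (det2 w z1 * det2 w z2)
    + z2.1 * (det2 w z1 * det2 w z3) + z1.1 * (det2 w z2 * det2 w z3)) / 3%:R.
  by rewrite /polar_v ev_row4 !mxE /det2 /=; field.
by rewrite e12 e13 e23 !mulr0 !addr0 oppr0 mul0r eqxx.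
Qed.

Lemma free_cube_combinations p q r s a b : p * s - q * r != 0 -> a != 0 ->
  free (K := K) [:: cube p q + a *: cube r s; cube p q + b *: cube (p + r) (q + s)].
Proof.
move=> d0 a0; set d := p * s - q * r in d0.
have d3 : d ^+ 3 != 0 by rewrite expf_neq0.
(* Each hi kills two of the three cubes. *)
pose h1 := cubic_of_roots (r, s) (r, s) (p + r, q + s).
pose h2 := cubic_of_roots (p, q) (p, q) (p + r, q + s).
have ev_of_roots z1 z2 z3 u v : ev (cubic_of_roots z1 z2 z3) (cube u v) =
    det2 (u, v) z1 * det2 (u, v) z2 * det2 (u, v) z3.
  exact: (cubic_of_rootsE z1 z2 z3 (u, v)).
have h2_w1 : ev h2 (cube p q + a *: cube r s) = - a * d ^+ 3.
  by rewrite evDr evZr !ev_of_roots /det2 /d /=; ring.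
have h2_w2 : ev h2 (cube p q + b *: cube (p + r) (q + s)) = 0.
  by rewrite evDr evZr !ev_of_roots /det2 /=; ring.
have h1_w2 : ev h1 (cube p q + b *: cube (p + r) (q + s)) = d ^+ 3.
  by rewrite evDr evZr !ev_of_roots /det2 /d /=; ring.
rewrite free_cons seq1_free span_seq1; apply/andP; split.
  apply/vlineP => -[k /(congr1 (ev h2))]; rewrite evZr h2_w1 h2_w2 mulr0.
  by apply/eqP; rewrite mulf_neq0 ?oppr_eq0.
by apply/eqP => w2_0; move: d3; rewrite -h1_w2 w2_0 /ev mul0mx mxE eqxx.
Qed.

Lemma line_spanned_by_cubes (L : {vspace 'rV[K]_4}) H G p q r s :
  \dim L = 2%N -> (forall c, (c \in L) = (ev H c == 0) && (ev G c == 0)) ->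
  (forall u v, (u != 0) || (v != 0) -> cube u v \notin L) ->
  p * s - q * r != 0 ->
  cubic H (p, q) = 0 -> cubic H (r, s) = 0 -> cubic H (p + r, q + s) = 0 ->
  exists a b, L = span [:: cube p q + a *: cube r s; cube p q + b *: cube (p + r) (q + s)].
Proof.
move=> dimL memL no_cube d0 Hx Hy Hxy.
have G_neq0 z : z != 0 -> cubic H z = 0 -> cubic G z != 0.
  case: z => u v; rewrite pair_neq0 => /no_cube uv_notin Huv.
  by apply: contraNneq uv_notin => Guv; rewrite memL; apply/andP; split; apply/eqP.
have d0' : det2 (p, q) (r, s) != 0 := d0.
have dxy0 : det2 (p + r, q + s) (r, s) != 0.
  by rewrite (_ : det2 _ _ = p * s - q * r) // /det2 /=; ring.
have Gx : cubic G (p, q) != 0 by apply: G_neq0 (det2_neq0l d0') Hx.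
have Gy : cubic G (r, s) != 0 by apply: G_neq0 (det2_neq0r d0') Hy.
have Gxy : cubic G (p + r, q + s) != 0 by apply: G_neq0 (det2_neq0l dxy0) Hxy.
exists (- (cubic G (p, q) / cubic G (r, s))), (- (cubic G (p, q) / cubic G (p + r, q + s))).
have memL_comb u v u' v' a : cubic H (u, v) = 0 -> cubic H (u', v') = 0 ->
    cubic G (u, v) + a * cubic G (u', v') = 0 -> cube u v + a *: cube u' v' \in L.
  move=> Hz Hw Gzw; rewrite memL !evDr !evZr.
  rewrite -/(cubic H (u, v)) -/(cubic H (u', v')) -/(cubic G (u, v)) -/(cubic G (u', v')).
  by rewrite Hz Hw Gzw mulr0 addr0 eqxx.
apply/eqP; rewrite eq_sym eqEdim; apply/andP; split.
  by apply/span_subvP => w; rewrite !inE => /orP [] /eqP ->; apply: memL_comb => //; field.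
rewrite dimL (eqP (free_cube_combinations _ d0 _)) //.
by rewrite oppr_eq0 mulf_neq0 ?invr_eq0.
Qed.

End BinaryCubicForms.

Section ClosedField.
Variables (K : closedFieldType) (charK : [pchar K] =i pred0).
Implicit Types (f g h : 'cV[K]_4) (z w : K * K).

Lemma monic_quadratic_splits (b c : K) : exists x1 x2, b = - (x1 + x2) /\ c = x1 * x2.
Proof.
have [x1 x1_root] := @solve_monicpoly K 2 (nth 0 [:: - c; - b]) isT.
rewrite !big_ord_recl big_ord0 /= expr0 expr1 mulr1 addr0 in x1_root.
exists x1, (- b - x1); split; first by ring.
by rewrite mulrBr -expr2 x1_root; ring.
Qed.

Lemma monic_cubic_splits (b c d : K) : exists x1 x2 x3,
  [/\ b = - (x1 + x2 + x3), c = x1 * x2 + x1 * x3 + x2 * x3 & d = - (x1 * x2 * x3)].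
Proof.
have [x1 x1_root] := @solve_monicpoly K 3 (nth 0 [:: - d; - c; - b]) isT.
rewrite !big_ord_recl big_ord0 /= expr0 expr1 mulr1 addr0 in x1_root.
have [x2 [x3 [e1 e2]]] := monic_quadratic_splits (b + x1) (c + b * x1 + x1 ^+ 2).
have bE : b = - (x1 + x2 + x3) by rewrite -[b](addrK x1) e1; ring.
have cE : c = x2 * x3 - b * x1 - x1 ^+ 2 by rewrite -e2; ring.
have dE : d = - (x1 ^+ 3 + b * x1 ^+ 2 + c * x1) by rewrite x1_root; ring.
by exists x1, x2, x3; split; rewrite ?dE ?cE bE; ring.
Qed.

Lemma binary_cubic_splits h : singular_root h (1, 0) \/
  exists c z1 z2 z3, [/\ z1 != 0, z2 != 0, z3 != 0 & h = c *: cubic_of_roots z1 z2 z3].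
Proof.
have n3 := natf_neq0 charK (isT : (0 < 3)%N).
have [h0 | h0] := eqVneq (h 0 0) 0; last first.
  have [x1 [x2 [x3 [e1 e2 e3]]]] :=
    monic_cubic_splits (3%:R * h 1 0 / h 0 0) (3%:R * h 2 0 / h 0 0) (h 3 0 / h 0 0).
  right; exists (h 0 0), (x1, 1), (x2, 1), (x3, 1); rewrite !pair_neq0 oner_neq0 !orbT.
  by split => //; apply: col4P; rewrite !mxE /= ?mulr1 ?mul1r -?e1 -?e2 -?e3;
    field; rewrite ?n3.
have [h1 | h1] := eqVneq (h 1 0) 0.
  left; rewrite /singular_root pair_neq0 oner_neq0 /cubic /polar_u /polar_v /cube !ev_row4 /=.
  by rewrite h0 h1; apply/and3P; split; apply/eqP; ring.
have [x1 [x2 [e1 e2]]] := monic_quadratic_splits (h 2 0 / h 1 0) (h 3 0 / (3%:R * h 1 0)).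
right; exists (- 3%:R * h 1 0), (1, 0), (x1, 1), (x2, 1); rewrite !pair_neq0 oner_neq0 !orbT.
split => //; apply: col4P; rewrite !mxE /= ?mulr1 ?mul1r ?mul0r ?addr0 ?add0r.
- by rewrite h0 mulr0.
- by field; rewrite n3.
- by rewrite -[x1 + x2]opprK -e1; field; rewrite n3 h1.
- by rewrite -e2; field; rewrite n3 h1.
Qed.

Lemma binary_cubic_cases h : (exists z, singular_root h z) \/ has_three_roots h.
Proof.
case: (binary_cubic_splits h) => [sing | [c [z1 [z2 [z3 [z1_0 z2_0 z3_0 ->]]]]]].
  by left; exists (1, 0).
have sing w : w != 0 -> det2 w z1 * det2 w z2 = 0 -> det2 w z1 * det2 w z3 = 0 ->
    det2 w z2 * det2 w z3 = 0 -> exists z, singular_root (c *: cubic_of_roots z1 z2 z3) z.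
  by move=> *; exists w; apply/singular_rootZ/singular_root_of_roots.
have [d12 | d12] := eqVneq (det2 z1 z2) 0.
  by left; apply: (sing z1); rewrite // ?det2xx ?d12 ?mulr0 ?mul0r.
have [d13 | d13] := eqVneq (det2 z1 z3) 0.
  by left; apply: (sing z1); rewrite // ?det2xx ?d13 ?mulr0 ?mul0r.
have [d23 | d23] := eqVneq (det2 z2 z3) 0.
  by left; apply: (sing z2); rewrite // ?det2xx ?d23 ?mulr0 ?mul0r.
right; exists z1, z2, z3; rewrite d12 d13 d23.
by split; rewrite // cubicZ (cubic_of_rootsE charK) ?(det2xx z1, det2xx z2, det2xx z3)
  ?(mulr0, mul0r).
Qed.

Lemma pencil_has_three_roots f g :
  (forall l m, l *: f + m *: g = 0 -> l = 0 /\ m = 0) ->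
  (forall z, z != 0 -> cubic f z = 0 -> cubic g z = 0 -> False) ->
  exists t, has_three_roots (f + t *: g).
Proof.
move=> fg_free no_common; apply: NNPP => no_three.
have sing t : exists z, singular_root (f + t *: g) z.
  by case: (binary_cubic_cases (f + t *: g)) => // three; case: no_three; exists t.
pose z k := xchoose (sing k%:R).
have zP k : singular_root (f + k%:R *: g) (z k) := xchooseP (sing k%:R).
have z_distinct : pairwise (fun z w => det2 z w != 0) (map z (iota 0 6)).
  rewrite pairwise_map; have := iota_uniq 0 6; rewrite uniq_pairwise.
  apply: sub_pairwise => i j /= ij; apply/eqP => zij.
  case/and4P: (zP i) => zi0 /eqP fi _ _; case/and4P: (zP j) => zj0 /eqP fj _ _.
  have ij' : i%:R != j%:R :> K by rewrite (inj_eq (natf_inj charK)).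
  by have [] := pencil_common_root ij' zj0 zij fi fj; apply: no_common.
have z_roots w : w \in map z (iota 0 6) -> w.2 != 0 -> root (jacobian_poly f g) (w.1 / w.2).
  by case/mapP => k _ ->; apply: singular_root_jacobian_poly (zP k).
have := size_pairwise_roots (jacobian_poly_neq0 charK fg_free) z_distinct z_roots.
by rewrite size_map size_iota => /leq_trans/(_ (size_poly _ _)).
Qed.

End ClosedField.

Theorem lemma2p2 (K : closedFieldType) (charK : [pchar K] =i pred0)
  (L : {vspace 'rV[K]_4}) (dimL : \dim L = 2%N)
  (hL : forall u v : K, (u != 0) || (v != 0) -> cube u v \notin L) :
  exists p q r s a b : K,
    p * s - q * r != 0 /\
    L = span [:: cube p q + a *: cube r s;
              cube p q + b *: cube (p + r) (q + s)].
Proof.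
have dimL2 : (\dim L + 2)%N = 4 by rewrite dimL.
have [f [g [fg_free memL]]] := vspace_codim2_kernel dimL2.
have no_common z : z != 0 -> cubic f z = 0 -> cubic g z = 0 -> False.
  case: z => u v; rewrite pair_neq0 => /hL /negP uv_notin fz gz; apply: uv_notin.
  by rewrite memL; apply/andP; split; apply/eqP.
have [t /has_three_roots_normal [p [q [r [s [d0 Hx Hy Hxy]]]]]] :=
  pencil_has_three_roots charK fg_free no_common.
have memL' c : (c \in L) = (ev (f + t *: g) c == 0) && (ev g c == 0).
  by rewrite memL evDl evZl; case: (ev g c =P 0) => [-> | _]; rewrite ?mulr0 ?addr0 ?andbF.
have [a [b spanL]] := line_spanned_by_cubes charK dimL memL' hL d0 Hx Hy Hxy.
by exists p, q, r, s, a, b.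
Qed.
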